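(* In the setting of the D2EAL algorithm (without periodic reset) described in the context, fix an agent $i$ with $d_i(0)\ge2$ and assume $\Omega_i(t)\subseteq\Omega_i(t-1)$ for all $t=1,\dots,T$. With $\eta_\alpha>0$ arbitrary and the choice $\eta_w=\sqrt{8\log d_i(0)/T}$, $$R_i^S(T):=\hat L_{T,i}-\min_{j\in\Lambda_i(T)}\bar L_{T,j}\le\sqrt{\tfrac{T}{2}\log d_i(0)}.$$
   Context: Setup. There are $N\ge 1$ agents indexed by $i\in[N]$ and a horizon $T\ge1$. The outcome space $\mathcal Y$ and action space $\mathcal A$ are convex subsets of $\mathbb R^n$. The loss $l:\mathcal A\times\mathcal Y\to[0,1]$ is convex in its first argument. The target sequence $y_1,\dots,y_T\in\mathcal Y$ is arbitrary. For each agent $i$ and each $t\ge1$, an ''expert'' supplies an arbitrary prediction $f_{t,i}\in\mathcal A$ of $y_t$ (available at time $t-1$). Agents communicate over a time-varying undirected graph; $\Omega_i(t)$ is the set of neighbours of agent $i$ at time $t$, $\Lambda_i(t):=\Omega_i(t)\cup\{i\}$ and $d_i(t):=|\Lambda_i(t)|$. D2EAL (without periodic reset). Initialize $\hat f_{0,i}=f_{1,i}$, $\hat\alpha_i(0)=\hat\alpha'_i(0)=\hat w_{ii}(0)=1$ for all $i$. For $t=0,1,\dots,T-1$, each agent $i$ computes: $\alpha_i(t)=\hat\alpha_i(t)/(\hat\alpha_i(t)+\hat\alpha'_i(t))$; individual prediction $\bar f_{t+1,i}=\alpha_i(t)f_{t+1,i}+(1-\alpha_i(t))\hat f_{t,i}$;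 social weights $w_{ij}(t)=\hat w_{jj}(t)/\sum_{j'\in\Lambda_i(t)}\hat w_{j'j'}(t)$ for $j\in\Lambda_i(t)$ and $w_{ij}(t)=0$ otherwise; social prediction $\hat f_{t+1,i}=\sum_{j\in\Lambda_i(t)}w_{ij}(t)\bar f_{t+1,j}$. After $y_{t+1}$ is revealed, define the losses $l_{t+1,i}=l(f_{t+1,i},y_{t+1})$, $\hat l^-_{t+1,i}=l(\hat f_{t,i},y_{t+1})$, $\bar l_{t+1,i}=l(\bar f_{t+1,i},y_{t+1})$, $\hat l_{t+1,i}=l(\hat f_{t+1,i},y_{t+1})$, and update $\hat\alpha_i(t+1)=\hat\alpha_i(t)e^{-\eta_\alpha l_{t+1,i}}$, $\hat\alpha'_i(t+1)=\hat\alpha'_i(t)e^{-\eta_\alpha \hat l^-_{t+1,i}}$, $\hat w_{ii}(t+1)=\hat w_{ii}(t)e^{-\eta_w\bar l_{t+1,i}}$. Cumulative losses: $L_{T,i}=\sum_{t=1}^T l_{t,i}$, $\hat L^-_{T,i}=\sum_{t=1}^T\hat l^-_{t,i}$, $\bar L_{T,i}=\sum_{t=1}^T\bar l_{t,i}$, $\hat L_{T,i}=\sum_{t=1}^T\hat l_{t,i}$. *)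

From HB Require Import structures.
From mathcomp Require Import all_boot all_order all_algebra.
From mathcomp Require Import all_classical all_reals all_analysis.
Set Implicit Arguments. Unset Strict Implicit. Unset Printing Implicit Defensive.
Import Order.TTheory GRing.Theory Num.Theory.
Local Open Scope ring_scope.

Definition convex_subset (R : realType) (n : nat) (S : 'rV[R]_n -> Prop) :=
  forall (a b : 'rV[R]_n) (lam : R), S a -> S b -> 0 <= lam <= 1 ->
    S (lam *: a + (1 - lam) *: b).

Definition convex_in_first (R : realType) (n : nat)
    (A Y : 'rV[R]_n -> Prop) (l : 'rV[R]_n -> 'rV[R]_n -> R) :=
  forall (a b yv : 'rV[R]_n) (lam : R), A a -> A b -> Y yv -> 0 <= lam <= 1 ->
    l (lam *: a + (1 - lam) *: b) yv <= lam * l a yv + (1 - lam) * l b yv.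

Definition Lam (N : nat) (Omega : nat -> 'I_N -> {set 'I_N}) (t : nat) (i : 'I_N)
  : {set 'I_N} := i |: Omega t i.

(* State of agent i at time t: (hat alpha_i(t), hat alpha'_i(t), hat w_ii(t), hat f_{t,i}) *)
Record st (R : realType) (n : nat) := St {
  ah : R; ah' : R; wh : R; fh : 'rV[R]_n }.

Section D2EAL.
Variables (R : realType) (n N : nat)
  (l : 'rV[R]_n -> 'rV[R]_n -> R)
  (f : nat -> 'I_N -> 'rV[R]_n)
  (y : nat -> 'rV[R]_n)
  (Omega : nat -> 'I_N -> {set 'I_N})
  (eta_a eta_w : R).

Definition alpha (s : 'I_N -> st R n) (i : 'I_N) : R :=
  ah (s i) / (ah (s i) + ah' (s i)).

Definition fbar_of (s : 'I_N -> st R n) (t : nat) (i : 'I_N) : 'rV[R]_n :=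
  alpha s i *: f t.+1 i + (1 - alpha s i) *: fh (s i).

Definition soc_w (s : 'I_N -> st R n) (t : nat) (i j : 'I_N) : R :=
  if j \in Lam Omega t i
  then wh (s j) / \sum_(j' in Lam Omega t i) wh (s j')
  else 0.

Definition fhat_next (s : 'I_N -> st R n) (t : nat) (i : 'I_N) : 'rV[R]_n :=
  \sum_(j in Lam Omega t i) soc_w s t i j *: fbar_of s t j.

Definition step (s : 'I_N -> st R n) (t : nat) (i : 'I_N) : st R n :=
  St (ah (s i) * expR (- (eta_a * l (f t.+1 i) (y t.+1))))
     (ah' (s i) * expR (- (eta_a * l (fh (s i)) (y t.+1))))
     (wh (s i) * expR (- (eta_w * l (fbar_of s t i) (y t.+1))))
     (fhat_next s t i).

Fixpoint state (t : nat) : 'I_N -> st R n :=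
  match t with
  | 0 => fun i => St 1 1 1 (f 1 i)
  | t'.+1 => step (state t') t'
  end.

Definition fhat (t : nat) (i : 'I_N) : 'rV[R]_n := fh (state t i).
Definition fbar_next (t : nat) (i : 'I_N) : 'rV[R]_n := fbar_of (state t) t i.

Definition LT (T : nat) (i : 'I_N) : R := \sum_(t < T) l (f t.+1 i) (y t.+1).
Definition hatLminus (T : nat) (i : 'I_N) : R := \sum_(t < T) l (fhat t i) (y t.+1).
Definition barL (T : nat) (i : 'I_N) : R := \sum_(t < T) l (fbar_next t i) (y t.+1).
Definition hatL (T : nat) (i : 'I_N) : R := \sum_(t < T) l (fhat t.+1 i) (y t.+1).

(* Social regret R_i^S(T) = hat L_{T,i} - min_{j in Lambda_i(T)} bar L_{T,j}
   (i belongs to Lambda_i(T), so barL T i is a valid seed for the min). *)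
Definition social_regret (T : nat) (i : 'I_N) : R :=
  hatL T i - \big[Order.min/barL T i]_(j in Lam Omega T i) barL T j.

End D2EAL.

(* Each self-weight is w_jj(t) = exp (-eta_w Lbar_{t,j}),
   and the social prediction hat f_{t+1,i} is the w-weighted average of the
   individual predictions over Lambda_i(t), so by convexity its loss is at most
   the weighted average of their losses.  Since Lambda_i(t+1) is contained in
   Lambda_i(t), Hoeffding's lemma bounds the potential
   W_t = sum_{j in Lambda_i(t)} w_jj(t) by
   W_{t+1} <= W_t exp (-eta_w hat l_{t+1,i} + eta_w^2/8), hence for every j in
   Lambda_i(T),  exp (-eta_w Lbar_{T,j}) <= W_T
                 <= d_i(0) exp (-eta_w hat L_{T,i} + T eta_w^2/8).
   Taking logarithms, eta_w R_i^S(T) <= log d_i(0) + T eta_w^2/8, and the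
   chosen eta_w balances the two terms. *)

From HB Require Import structures.
From mathcomp Require Import all_boot all_order all_algebra.
From mathcomp Require Import all_classical all_reals all_analysis.
From mathcomp Require Import ring lra.
Set Implicit Arguments. Unset Strict Implicit. Unset Printing Implicit Defensive.
Import Order.TTheory GRing.Theory Num.Theory.
Import numFieldNormedType.Exports.
Local Open Scope ring_scope.

Section RealInequalities.
Variable R : realType.
Implicit Types m x z eta : R.

Lemma ger0_is_derive_le (g dg : R -> R) (a x : R) :
  (forall z, is_derive z 1 g (dg z)) -> (forall z, a <= z -> 0 <= dg z) ->
  a <= x -> g a <= g x.
Proof.
move=> g_dg dg_ge0 ax.
have g_cont : continuous g.
  by move=> z; apply/differentiable_continuous/derivable1_diffP; case: (g_dg z).
have [c + g_mvt] := MVT_segment ax (fun z _ => g_dg z) (continuous_subspaceT g_cont).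
rewrite in_itv /= => /andP[ac _].
by rewrite -subr_ge0 g_mvt mulr_ge0 ?subr_ge0 ?dg_ge0 // ltW.
Qed.

(* [tanh (x / 2) <= x / 2] for [x >= 0], with the denominators cleared. *)
Lemma tanh_half_le x : 0 <= x -> 2 * (1 - expR (- x)) <= x * (1 + expR (- x)).
Proof.
move=> x_ge0; rewrite -subr_ge0.
pose g z := z * (1 + expR (- z)) - 2 * (1 - expR (- z)).
have g_deriv z : is_derive z 1 g (1 - expR (- z) * (1 + z)).
  by apply: trigger_derive; rewrite /GRing.scale /=; ring.
have := ger0_is_derive_le g_deriv _ x_ge0.
rewrite /g oppr0 expR0 !mul0r subrr mulr0 subr0; apply=> z _.
have := expR_ge1Dx z; have := expR_gt0 (- z).
have : expR (- z) * expR z = 1 by rewrite -expRD addNr expR0.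
nra.
Qed.

Lemma hoeffding_slope m z : 0 <= m <= 1 -> 0 <= z ->
  m * (1 - m) * (1 - expR (- z)) <= (1 - m + m * expR (- z)) * (z / 4).
Proof.
move=> /andP[m_ge0 m_le1] z_ge0.
pose v := expR (- (z / 2)).
have -> : expR (- z) = v * v by rewrite -expRD -opprD -splitr.
have v_gt0 : 0 < v := expR_gt0 _.
have v_le1 : v <= 1 by rewrite expR_le1 oppr_le0 divr_ge0.
have tanh_v : 1 - v <= z / 4 * (1 + v).
  have := tanh_half_le (divr_ge0 z_ge0 (ler0n _ 2)); rewrite -/v.
  have -> : z / 4 * (1 + v) = z / 2 * (1 + v) / 2 by field.
  lra.
have lower_D : m * (1 - m) * (1 + v) ^+ 2 <= 1 - m + m * (v * v).
  have -> : 1 - m + m * (v * v) = m * (1 - m) * (1 + v) ^+ 2 + (1 - m - m * v) ^+ 2.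
    by ring.
  by rewrite lerDl sqr_ge0.
have mm_ge0 : 0 <= m * (1 - m) by nra.
have -> : m * (1 - m) * (1 - v * v) = m * (1 - m) * (1 + v) * (1 - v) by ring.
apply: le_trans (_ : m * (1 - m) * (1 + v) * (z / 4 * (1 + v)) <= _).
  by rewrite ler_wpM2l // mulr_ge0 // addr_ge0 // ltW.
have -> : m * (1 - m) * (1 + v) * (z / 4 * (1 + v)) = m * (1 - m) * (1 + v) ^+ 2 * (z / 4).
  by ring.
by rewrite ler_wpM2r // divr_ge0.
Qed.

Lemma hoeffding_bernoulli m eta : 0 <= m <= 1 -> 0 <= eta ->
  1 - m + m * expR (- eta) <= expR (- (eta * m) + eta ^+ 2 / 8).
Proof.
move=> m01 eta_ge0.
pose G z := (1 - m + m * expR (- z)) * expR (z * m - z ^+ 2 / 8).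
pose dG z := expR (z * m - z ^+ 2 / 8) *
  ((1 - m + m * expR (- z)) * (z / 4) - m * (1 - m) * (1 - expR (- z))).
have G_deriv z : is_derive z 1 (fun z => - G z) (dG z).
  by apply: trigger_derive; rewrite /GRing.scale /= /dG; field.
have G0 : G 0 = 1.
  by rewrite /G oppr0 expR0 mulr1 subrK mul1r mul0r expr0n /= mul0r subrr expR0.
have G_le1 : G eta <= 1.
  rewrite -lerN2 -G0; apply: ger0_is_derive_le G_deriv _ eta_ge0 => z z_ge0.
  by rewrite mulr_ge0 ?expR_ge0 // subr_ge0 hoeffding_slope.
have -> : - (eta * m) + eta ^+ 2 / 8 = - (eta * m - eta ^+ 2 / 8) by ring.
by rewrite [X in _ <= X]expRN -div1r ler_pdivlMr ?expR_gt0.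
Qed.

Lemma expRN_le_chord x eta : 0 <= x <= 1 ->
  expR (- (eta * x)) <= 1 - x + x * expR (- eta).
Proof.
move=> /andP[x_ge0 x_le1].
have := convex_expR (Itv01 x_ge0 x_le1) (- eta) 0.
by rewrite !convRE /= /unstable.onem expR0 mulr0 addr0 mulr1 mulrN mulrC addrC.
Qed.

Lemma weighted_hoeffding (I : finType) (S : {pred I}) (w x : I -> R) eta (a : I) :
  a \in S -> (forall j, 0 < w j) -> (forall j, 0 <= x j <= 1) -> 0 <= eta ->
  \sum_(j in S) w j * expR (- (eta * x j)) <=
  (\sum_(j in S) w j) *
    expR (- (eta * ((\sum_(j in S) w j * x j) / \sum_(j in S) w j)) + eta ^+ 2 / 8).
Proof.
move=> aS w_gt0 x01 eta_ge0.
set W := \sum_(j in S) w j; set M := \sum_(j in S) w j * x j.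
have W_gt0 : 0 < W.
  by rewrite /W (bigD1 a) //= ltr_pwDl // sumr_ge0 // => j _; apply: ltW.
have M_ge0 : 0 <= M.
  by apply: sumr_ge0 => j _; case/andP: (x01 j) => x_ge0 _; rewrite mulr_ge0 // ltW.
have M_leW : M <= W.
  by apply: ler_sum => j _; case/andP: (x01 j) => _ x_le1; rewrite ler_piMr // ltW.
apply: (@le_trans _ _ (\sum_(j in S) w j * (1 - x j + x j * expR (- eta)))).
  by apply: ler_sum => j _; rewrite ler_pM2l // expRN_le_chord.
have -> : \sum_(j in S) w j * (1 - x j + x j * expR (- eta)) =
          W * (1 - M / W + M / W * expR (- eta)).
  rewrite (eq_bigr (fun j => w j - w j * x j + w j * x j * expR (- eta))).
    by rewrite big_split /= sumrB -mulr_suml -/W -/M; field; rewrite gt_eqF.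
  by move=> j _; ring.
rewrite ler_pM2l // hoeffding_bernoulli //.
by rewrite divr_ge0 ?(ltW W_gt0) // ler_pdivrMr // mul1r.
Qed.

Lemma ler_sum_subset (I : finType) (A B : {set I}) (F : I -> R) :
  (forall j, 0 <= F j) -> B \subset A -> \sum_(j in B) F j <= \sum_(j in A) F j.
Proof.
move=> F_ge0 BA; rewrite [X in _ <= X](big_setID B) /= (finset.setIidPr BA) lerDl.
exact: sumr_ge0.
Qed.

Lemma sqrt_rate_tuning (L T : R) : 0 <= L -> 0 < T ->
  L + T * (Num.sqrt (8 * L / T) ^+ 2 / 8) = Num.sqrt (8 * L / T) * Num.sqrt (T / 2 * L).
Proof.
move=> L_ge0 T_gt0; have T_ge0 := ltW T_gt0.
rewrite -sqrtrM ?divr_ge0 ?mulr_ge0 // sqr_sqrtr ?divr_ge0 ?mulr_ge0 //.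
rewrite (_ : _ * (T / 2 * L) = (2 * L) ^+ 2); last by field; rewrite gt_eqF.
by rewrite sqrtr_sqr ger0_norm ?mulr_ge0 //; field; rewrite gt_eqF.
Qed.

End RealInequalities.

Section WeightedAverage.
Variables (R : realType) (n : nat) (I : Type) (w : I -> R) (x : I -> 'rV[R]_n).
Hypothesis w_gt0 : forall j, 0 < w j.

Definition wavg (s : seq I) : 'rV[R]_n :=
  (\sum_(j <- s) w j)^-1 *: \sum_(j <- s) w j *: x j.

Lemma sum_weights_cons_gt0 a s : 0 < \sum_(j <- a :: s) w j.
Proof. by rewrite big_cons ltr_pwDl // sumr_ge0 // => j _; apply: ltW. Qed.

Lemma scale_sum_wavg s : (\sum_(j <- s) w j) *: wavg s = \sum_(j <- s) w j *: x j.
Proof.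
case: s => [|a s]; first by rewrite !big_nil scale0r.
by rewrite scalerA mulfV ?scale1r // gt_eqF // sum_weights_cons_gt0.
Qed.

Lemma wavg1 a : wavg [:: a] = x a.
Proof. by rewrite /wavg !big_seq1 scalerA mulVf ?scale1r // gt_eqF. Qed.

Lemma wavg_cons a s (lam := w a / (w a + \sum_(j <- s) w j)) :
  0 <= lam <= 1 /\ wavg (a :: s) = lam *: x a + (1 - lam) *: wavg s.
Proof.
have W_ge0 : 0 <= \sum_(j <- s) w j by apply: sumr_ge0 => j _; apply: ltW.
have Wa_gt0 : 0 < w a + \sum_(j <- s) w j by rewrite ltr_pwDl.
split; first by rewrite divr_ge0 ?ler_pdivrMr ?mul1r ?lerDl ?(ltW Wa_gt0) ?(ltW (w_gt0 a)).
rewrite {1}/wavg !big_cons -scale_sum_wavg scalerDr 2!scalerA /lam.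
congr (_ + _); first by rewrite mulrC.
by congr (_ *: _); field; rewrite gt_eqF.
Qed.

Variables (A Y : 'rV[R]_n -> Prop) (l : 'rV[R]_n -> 'rV[R]_n -> R).
Hypotheses (convex_A : convex_subset A) (x_in_A : forall j, A (x j)).

Lemma wavg_in_convex a s : A (wavg (a :: s)).
Proof.
elim: s a => [|b s IHs] a.
  by rewrite wavg1.
by have [lam01 ->] := wavg_cons a (b :: s); apply: convex_A.
Qed.

Lemma jensen_wavg yv : convex_in_first A Y l -> Y yv -> forall a s,
  l (wavg (a :: s)) yv <=
    (\sum_(j <- a :: s) w j)^-1 * \sum_(j <- a :: s) w j * l (x j) yv.
Proof.
move=> convex_l Y_yv a s; elim: s a => [|b s IHs] a.
  by rewrite wavg1 !big_seq1 mulrA mulVf ?mul1r // gt_eqF.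
have [lam01 ->] := wavg_cons a (b :: s).
apply: le_trans (convex_l _ _ _ _ (x_in_A a) (wavg_in_convex b s) Y_yv lam01) _.
move: lam01 => /andP[_ lam_le1].
have W_gt0 := sum_weights_cons_gt0 b s.
rewrite !(big_cons _ _ a).
apply: le_trans (lerD (lexx _) (ler_wpM2l _ (IHs b))) _; first by rewrite subr_ge0.
by rewrite le_eqVlt; apply/orP; left; apply/eqP; field; rewrite !gt_eqF // ltr_pwDl // ltW.
Qed.

End WeightedAverage.

Section WeightedAverageSet.
Variables (R : realType) (n : nat) (I : finType) (w : I -> R) (x : I -> 'rV[R]_n).
Variables (A Y : 'rV[R]_n -> Prop) (l : 'rV[R]_n -> 'rV[R]_n -> R) (S : {set I}) (j0 : I).
Hypotheses (w_gt0 : forall j, 0 < w j) (j0S : j0 \in S).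

Lemma enum_cons : exists a s, enum S = a :: s.
Proof.
by case E : (enum S) => [|a s]; [move: j0S; rewrite -mem_enum E | exists a, s].
Qed.

Lemma wavg_set_in_convex :
  convex_subset A -> (forall j, A (x j)) -> A (wavg w x (enum S)).
Proof. by move=> convex_A x_in_A; have [a [s ->]] := enum_cons; apply: wavg_in_convex. Qed.

Lemma jensen_wavg_set yv : convex_subset A -> (forall j, A (x j)) ->
  convex_in_first A Y l -> Y yv ->
  l (wavg w x (enum S)) yv <= (\sum_(j in S) w j)^-1 * \sum_(j in S) w j * l (x j) yv.
Proof.
move=> convex_A x_in_A convex_l Y_yv; rewrite -!big_enum /=.
have [a [s ->]] := enum_cons; exact: (jensen_wavg w_gt0 convex_A x_in_A convex_l Y_yv).
Qed.

End WeightedAverageSet.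

Section D2EALBounds.
Variables (R : realType) (n N : nat) (A Y : 'rV[R]_n -> Prop)
  (l : 'rV[R]_n -> 'rV[R]_n -> R) (f : nat -> 'I_N -> 'rV[R]_n)
  (y : nat -> 'rV[R]_n) (Omega : nat -> 'I_N -> {set 'I_N}) (eta_a eta_w : R).

Local Notation state := (state l f y Omega eta_a eta_w).
Local Notation barL := (barL l f y Omega eta_a eta_w).
Local Notation hatL := (hatL l f y Omega eta_a eta_w).
Local Notation fbar t := (fun k => fbar_of f (state t) t k).

Lemma mem_Lam t j : j \in Lam Omega t j.
Proof. exact: setU11. Qed.

Lemma alpha_itv t j : 0 <= alpha (state t) j <= 1.
Proof.
have ah_gt0 s k : 0 < ah (state s k) /\ 0 < ah' (state s k).
  elim: s k => [|s IHs] k /=; first by rewrite ltr01.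
  by have [? ?] := IHs k; rewrite !mulr_gt0 ?expR_gt0.
have [a_gt0 a'_gt0] := ah_gt0 t j.
by rewrite /alpha divr_ge0 ?ler_pdivrMr ?mul1r ?lerDl ?addr_ge0 ?ltW ?addr_gt0.
Qed.

Lemma wh_state t j : wh (state t j) = expR (- (eta_w * barL t j)).
Proof.
elim: t j => [|t IHt] j; first by rewrite /barL big_ord0 mulr0 oppr0 expR0.
by rewrite /= IHt -expRD /barL big_ord_recr /= /fbar_next mulrDr opprD.
Qed.

Lemma wh_gt0 t j : 0 < wh (state t j).
Proof. by rewrite wh_state expR_gt0. Qed.

Lemma fh_succE t j :
  fh (state t.+1 j) = wavg (fun k => wh (state t k)) (fbar t) (enum (Lam Omega t j)).
Proof.
rewrite /= /fhat_next /wavg !big_enum /= scaler_sumr.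
by apply: eq_bigr => k kL; rewrite /soc_w kL scalerA mulrC.
Qed.

Hypotheses (convex_A : convex_subset A) (convex_l : convex_in_first A Y l)
  (loss_itv : forall a yv, A a -> Y yv -> 0 <= l a yv <= 1)
  (y_in_Y : forall t, Y (y t)) (f_in_A : forall t j, A (f t j)).

Lemma fh_in_A t j : A (fh (state t j)).
Proof.
elim: t j => [|t IHt] j; first exact: f_in_A.
rewrite fh_succE; apply: (wavg_set_in_convex (wh_gt0 t) (mem_Lam t j)) => // k.
by apply: convex_A; rewrite ?alpha_itv.
Qed.

Lemma fbar_in_A t j : A (fbar t j).
Proof. by apply: convex_A; [apply: f_in_A | apply: fh_in_A | apply: alpha_itv]. Qed.

Lemma fbar_loss_itv t j : 0 <= l (fbar t j) (y t.+1) <= 1.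
Proof. exact: loss_itv (fbar_in_A t j) (y_in_Y _). Qed.

Lemma fh_succ_loss_le t j :
  l (fh (state t.+1 j)) (y t.+1) <=
    (\sum_(k in Lam Omega t j) wh (state t k))^-1 *
    \sum_(k in Lam Omega t j) wh (state t k) * l (fbar t k) (y t.+1).
Proof.
rewrite fh_succE.
exact: (jensen_wavg_set (wh_gt0 t) (mem_Lam t j) convex_A (fbar_in_A t) convex_l).
Qed.

Definition potential t i := \sum_(k in Lam Omega t i) wh (state t k).

Lemma potential_succ_le t i : Omega t.+1 i \subset Omega t i -> 0 <= eta_w ->
  potential t.+1 i <=
    potential t i * expR (- (eta_w * l (fh (state t.+1 i)) (y t.+1)) + eta_w ^+ 2 / 8).
Proof.
move=> shrink eta_ge0.
have -> : potential t.+1 i =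
  \sum_(k in Lam Omega t.+1 i) wh (state t k) * expR (- (eta_w * l (fbar t k) (y t.+1))) by [].
apply: le_trans (ler_sum_subset _ (finset.setUS [set i] shrink)) _ => [k|].
  exact: mulr_ge0 (ltW (wh_gt0 t k)) (expR_ge0 _).
apply: le_trans (weighted_hoeffding (mem_Lam t i) (wh_gt0 t) (@fbar_loss_itv t) eta_ge0) _.
have potential_ge0 : 0 <= potential t i by apply: sumr_ge0 => k _; exact: ltW (wh_gt0 t k).
by rewrite ler_wpM2l // ler_expR lerD2r lerN2 ler_wpM2l // mulrC fh_succ_loss_le.
Qed.

Lemma potential_le T i : (forall t, (t < T)%N -> Omega t.+1 i \subset Omega t i) ->
  0 <= eta_w ->
  potential T i <= #|Lam Omega 0 i|%:R * expR (- (eta_w * hatL T i) + T%:R * (eta_w ^+ 2 / 8)).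
Proof.
move=> + eta_ge0; elim: T => [|t IHt] shrink.
  rewrite /hatL big_ord0 mulr0 oppr0 mul0r addr0 expR0 mulr1.
  by rewrite /potential (eq_bigr (fun=> 1)) ?sumr_const.
apply: le_trans (potential_succ_le (shrink t (ltnSn t)) eta_ge0) _.
apply: le_trans (ler_wpM2r (expR_ge0 _) (IHt (fun s st => shrink s (ltnW st)))) _.
rewrite -mulrA -expRD /hatL big_ord_recr /= -[t.+1%:R]natr1.
by rewrite le_eqVlt; apply/orP; left; apply/eqP; congr (_ * expR _); ring.
Qed.

Lemma scaled_social_regret_le T i :
  (forall t, (t < T)%N -> Omega t.+1 i \subset Omega t i) -> 0 <= eta_w ->
  eta_w * social_regret l f y Omega eta_a eta_w T i <=
    ln (#|Lam Omega 0 i|%:R) + T%:R * (eta_w ^+ 2 / 8).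
Proof.
move=> shrink eta_ge0.
set C := _ + _.
have d_gt0 : 0 < #|Lam Omega 0 i|%:R :> R.
  by rewrite ltr0n; apply/card_gt0P; exists i; exact: mem_Lam.
have barL_bound j : j \in Lam Omega T i -> eta_w * (hatL T i - barL T j) <= C.
  move=> jL.
  have wh_le : wh (state T j) <= potential T i.
    rewrite /potential (bigD1 j) //= lerDl sumr_ge0 // => k _; exact: ltW (wh_gt0 T k).
  have := le_trans wh_le (potential_le shrink eta_ge0).
  rewrite wh_state -[X in _ <= X * _]lnK ?posrE // -expRD ler_expR /C; lra.
rewrite /social_regret; apply: (big_ind (fun v => eta_w * (hatL T i - v) <= C)).
- exact: barL_bound (mem_Lam T i).
- by move=> u v hu hv; rewrite minEle; case: ifP.
- exact: barL_bound.
Qed.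

End D2EALBounds.

Theorem corollary2 (R : realType) (n N : nat)
  (A Y : 'rV[R]_n -> Prop) (l : 'rV[R]_n -> 'rV[R]_n -> R)
  (f : nat -> 'I_N -> 'rV[R]_n) (y : nat -> 'rV[R]_n)
  (Omega : nat -> 'I_N -> {set 'I_N})
  (T : nat) (eta_a eta_w : R) (i : 'I_N) :
  convex_subset A -> convex_subset Y ->
  (forall a yv, A a -> Y yv -> 0 <= l a yv <= 1) ->
  convex_in_first A Y l ->
  (forall t, Y (y t)) ->
  (forall t j, A (f t j)) ->
  (forall t j k, (k \in Omega t j) = (j \in Omega t k)) ->
  (1 <= T)%N ->
  (2 <= #|Lam Omega 0 i|)%N ->
  (forall t, (1 <= t <= T)%N -> Omega t i \subset Omega t.-1 i) ->
  0 < eta_a ->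
  eta_w = Num.sqrt (8 * ln (#|Lam Omega 0 i|%:R) / T%:R) ->
  social_regret l f y Omega eta_a eta_w T i
    <= Num.sqrt (T%:R / 2 * ln (#|Lam Omega 0 i|%:R)).
Proof.
move=> convex_A _ loss_itv convex_l y_in_Y f_in_A _ T_ge1 d_ge2 shrink _ eta_def.
have L_gt0 : 0 < ln (#|Lam Omega 0 i|%:R : R) by rewrite ln_gt0 // ltr1n.
have T_gt0 : 0 < T%:R :> R by rewrite ltr0n.
have eta_gt0 : 0 < eta_w by rewrite eta_def sqrtr_gt0 !mulr_gt0 // invr_gt0.
rewrite -(ler_pM2l eta_gt0) [in X in _ <= X]eta_def -sqrt_rate_tuning ?(ltW L_gt0) // -eta_def.
apply: (scaled_social_regret_le eta_a convex_A convex_l loss_itv y_in_Y f_in_A _ (ltW eta_gt0)).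
by move=> t tT; apply: shrink.
Qed.
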